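(* Let $T$ be a tree of order at least $2$ with support vertices $v_1,\dots,v_s$, where $v_i$ is adjacent to exactly $\ell_i$ leaves. Then there exists an ISTDF $f$ of $T$ of weight $\gamma^{0}_{st}(T)$ such that, for every $i\in\{1,\dots,s\}$, $f$ assigns the value $1$ to at least $\lfloor \ell_i/2\rfloor$ of the leaves adjacent to $v_i$.
   Context: For a vertex $v$ of a graph $G=(V,E)$, $N(v)$ is its open neighborhood, and for $f:V\to\mathbb{R}$ and $B\subseteq V$ write $f(B)=\sum_{v\in B}f(v)$; $f(V)$ is the weight of $f$. An inverse signed total dominating function (ISTDF) of $G$ is a function $f:V\to\{-1,1\}$ such that $f(N(v))\le 0$ for every $v\in V$. The inverse signed total domination number $\gamma^{0}_{st}(G)$ is the maximum weight of an ISTDF of $G$. A leaf of a tree is a vertex of degree $1$; a support vertex is a vertex adjacent to at least one leaf. *)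

From mathcomp Require Import all_boot all_order all_algebra.
Set Implicit Arguments. Unset Strict Implicit. Unset Printing Implicit Defensive.
Import Order.TTheory GRing.Theory Num.Theory.

Definition simple_graph (T : finType) (e : rel T) : Prop :=
  symmetric e /\ irreflexive e.

(* Tree: connected simple graph with exactly #|T| - 1 edges
   (ordered adjacent pairs counted twice). *)
Definition is_tree (T : finType) (e : rel T) : Prop :=
  simple_graph e /\ (forall x y : T, connect e x y) /\
  #|[set p : T * T | e p.1 p.2]| = (#|T| - 1).*2.

Definition nbhd (T : finType) (e : rel T) (v : T) : {set T} := [set u | e v u].
Definition deg (T : finType) (e : rel T) (v : T) : nat := #|nbhd e v|.
Definition leaf (T : finType) (e : rel T) (v : T) : bool := deg e v == 1%N.
Definition support_vertex (T : finType) (e : rel T) (v : T) : bool :=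
  [exists u, e v u && leaf e u].
Definition leaves_at (T : finType) (e : rel T) (v : T) : {set T} :=
  [set u | e v u & leaf e u].

Local Open Scope ring_scope.

Definition fsum (T : finType) (f : T -> int) (B : {set T}) : int :=
  \sum_(u in B) f u.
Definition weight (T : finType) (f : T -> int) : int := \sum_(u : T) f u.

Definition is_ISTDF (T : finType) (e : rel T) (f : T -> int) : Prop :=
  (forall v, f v = 1 \/ f v = -1) /\ (forall v, fsum f (nbhd e v) <= 0).

(* f is an ISTDF of maximum weight, i.e. weight f = gamma^0_st *)
Definition is_max_ISTDF (T : finType) (e : rel T) (f : T -> int) : Prop :=
  is_ISTDF e f /\ forall g, is_ISTDF e g -> weight g <= weight f.

From mathcomp Require Import all_boot all_order all_algebra.
From mathcomp Require Import zify.
Import Order.TTheory GRing.Theory Num.Theory.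
Set Implicit Arguments. Unset Strict Implicit.

(* An ISTDF is the signed indicator of its set B of positive vertices, and the
   ISTDF condition says that every neighbourhood meets B in at most half of
   its vertices.  Among such sets B take one of maximum size and, among those,
   with the most leaves.  If a support vertex v had fewer than floor(l/2)
   positive leaves, let u be a negative leaf at v.  Since v is the only
   neighbour of u, turning u positive only matters at v: if some non-leaf
   neighbour w of v is positive, exchanging w for u keeps the size and gains
   a leaf; otherwise all positive neighbours of v are leaves, so v has room
   for one more positive neighbour and u can be added to B. *)

Local Open Scope ring_scope.

Section SignedIndicator.
Variable T : finType.

Definition signed_indicator (B : {set T}) : T -> int :=
  fun u => if u \in B then 1 else -1.

Lemma fsum_signed_indicator (B A : {set T}) :
  fsum (signed_indicator B) A = (#|A :&: B|.*2)%:Z - #|A|%:Z.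
Proof.
rewrite /fsum (bigID (mem B)) /=.
rewrite (eq_big (fun u => u \in A :&: B) (fun=> 1)); last 2 first.
- by move=> u; rewrite inE.
- by move=> u /andP[_ uB]; rewrite /signed_indicator uB.
rewrite [X in _ + X](eq_big (fun u => u \in A :\: B) (fun=> -1)); last 2 first.
- by move=> u; rewrite !inE andbC.
- by move=> u /andP[_ /negbTE uB]; rewrite /signed_indicator uB.
rewrite !sumr_const -(cardsID B A) mulNrn -!natz; lia.
Qed.

Lemma weight_signed_indicator (B : {set T}) :
  weight (signed_indicator B) = (#|B|.*2)%:Z - #|T|%:Z.
Proof.
have -> : weight (signed_indicator B) = fsum (signed_indicator B) setT.
  by apply: eq_bigl => u; rewrite inE.
by rewrite fsum_signed_indicator setTI cardsT.
Qed.

Lemma signed_indicator_pos (g : T -> int) :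
  (forall v, g v = 1 \/ g v = -1) -> signed_indicator [set u | g u == 1] =1 g.
Proof. by move=> g_pm u; rewrite /signed_indicator inE; case: (g_pm u) => ->. Qed.

End SignedIndicator.

Section ISTDSets.
Variables (T : finType) (e : rel T).

Definition istd_set (B : {set T}) : bool :=
  [forall x, #|nbhd e x :&: B|.*2 <= deg e x]%N.

Lemma is_ISTDF_signed_indicator (B : {set T}) :
  is_ISTDF e (signed_indicator B) <-> istd_set B.
Proof.
split=> [[_ le0] | /forallP okB].
  by apply/forallP=> x; have := le0 x; rewrite fsum_signed_indicator subr_le0.
split=> v; first by rewrite /signed_indicator; case: (v \in B); [left|right].
by rewrite fsum_signed_indicator subr_le0 lez_nat.
Qed.

Lemma eq_is_ISTDF (f g : T -> int) : f =1 g -> is_ISTDF e f -> is_ISTDF e g.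
Proof.
move=> fg [f_pm f_le0]; split=> v; first by rewrite -fg.
by rewrite /fsum -(eq_bigr _ (fun u _ => fg u)); apply: f_le0.
Qed.

Lemma is_max_ISTDF_signed_indicator (B : {set T}) :
  istd_set B -> (forall B', istd_set B' -> #|B'| <= #|B|)%N ->
  is_max_ISTDF e (signed_indicator B).
Proof.
move=> okB maxB; split; first exact/is_ISTDF_signed_indicator.
move=> g gISTDF; have [g_pm _] := gISTDF.
have g_eq := signed_indicator_pos g_pm.
have /is_ISTDF_signed_indicator/maxB : is_ISTDF e (signed_indicator [set u | g u == 1]).
  by apply: eq_is_ISTDF gISTDF => u; rewrite g_eq.
have -> : weight g = weight (signed_indicator [set u | g u == 1]).
  by apply: eq_bigr => u _; rewrite g_eq.
rewrite !weight_signed_indicator; lia.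
Qed.

Lemma leaf_neighbor_unique u v x :
  symmetric e -> e v u -> leaf e u -> e x u -> x = v.
Proof.
move=> sym evu /cards1P[y Ny] exu.
have: v \in nbhd e u by rewrite inE sym.
have: x \in nbhd e u by rewrite inE sym.
by rewrite Ny !inE => /eqP -> /eqP ->.
Qed.

Lemma istd_set_leaf_update (B B' : {set T}) u v :
  symmetric e -> e v u -> leaf e u -> istd_set B -> B' \subset u |: B ->
  (#|nbhd e v :&: B'|.*2 <= deg e v)%N -> istd_set B'.
Proof.
move=> sym evu lu /forallP okB sB' okv; apply/forallP=> x.
have [-> // | xv] := eqVneq x v.
have exu : ~~ e x u by apply: contra_neqN xv => /(leaf_neighbor_unique sym evu lu).
apply: leq_trans (okB x); rewrite leq_double; apply: subset_leq_card.
apply/subsetP=> y; rewrite !inE => /andP[exy yB']; rewrite exy.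
move/subsetP/(_ y yB'): sB'; rewrite !inE => /orP[/eqP yu | //].
by rewrite -yu exy in exu.
Qed.

Lemma exists_istd_set_lex_max (L : {set T}) :
  exists2 B, istd_set B &
    (forall B', istd_set B' -> #|B'| <= #|B| /\
       (#|B'| = #|B| -> #|B' :&: L| <= #|B :&: L|))%N.
Proof.
have ok0 : istd_set set0 by apply/forallP=> x; rewrite setI0 cards0.
pose n := #|T|.
have [B okB maxB] := arg_maxnP (fun B : {set T} => #|B| * n.+1 + #|B :&: L|)%N ok0.
exists B => // B' /maxB; have := max_card (B :&: L); have := max_card (B' :&: L).
rewrite -/n; nia.
Qed.

Section LexMax.
Hypothesis sym_e : symmetric e.
Variable B : {set T}.
Hypothesis okB : istd_set B.
Hypothesis maxB : forall B', istd_set B' -> (#|B'| <= #|B| /\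
  (#|B'| = #|B| -> #|B' :&: [set u | leaf e u]| <= #|B :&: [set u | leaf e u]|))%N.

Lemma half_leaves_at_in_lex_max v :
  (#|leaves_at e v|./2 <= #|leaves_at e v :&: B|)%N.
Proof.
set L := leaves_at e v; rewrite leqNgt; apply/negP => few.
have [LB | /subsetPn[u uL uB]] := boolP (L \subset B).
  by move: few; rewrite (setIidPl LB); have := odd_double_half #|L|; lia.
have [evu lu] : e v u /\ leaf e u by move: uL; rewrite inE => /andP.
have LN : L \subset nbhd e v by apply/subsetP=> y; rewrite !inE => /andP[].
have [/existsP[w /and3P[evw lw wB]] | noW] :=
  boolP [exists w, [&& e v w, ~~ leaf e w & w \in B]].
- pose B' := u |: B :\ w.
  have uw : u != w by apply: contraNneq lw => <-.
  have cardB' : #|B'| = #|B| by rewrite cardsU1 !inE (negbTE uB) andbF (cardsD1 w B) wB.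
  have okB' : istd_set B'.
    apply: (istd_set_leaf_update sym_e evu lu okB); first exact/setUS/subD1set.
    have -> : nbhd e v :&: B' = u |: (nbhd e v :&: B) :\ w.
      apply/setP=> y; rewrite !inE; case: eqP => [-> | _] /=; first by rewrite evu.
      by case: (e v y); case: (y != w).
    have := cardsD1 w (nbhd e v :&: B); rewrite cardsU1 !inE (negbTE uB) !andbF evw wB /=.
    by move=> <-; exact: (forallP okB v).
  have leavesB' : B' :&: [set u | leaf e u] = u |: (B :&: [set u | leaf e u]).
    apply/setP=> x; rewrite !inE; case: eqVneq => [-> | _ ] //=.
    by case: eqVneq => [-> | _]; rewrite ?(negbTE lw) ?andbF.
  have [_ /(_ cardB')] := maxB okB'.
  by rewrite leavesB' cardsU1 in_setI (negbTE uB) /= add1n ltnn.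
- have NB : nbhd e v :&: B \subset L :&: B.
    apply/subsetP=> y; rewrite !inE => /andP[evy yB]; rewrite evy yB andbT.
    by apply: contraNT noW => ly; apply/existsP; exists y; rewrite evy ly yB.
  have okB' : istd_set (u |: B).
    apply: (istd_set_leaf_update sym_e evu lu okB) => //.
    rewrite setIUr (setIidPr _) ?sub1set ?inE // cardsU1 !inE (negbTE uB) andbF /=.
    have := subset_leq_card NB; have := subset_leq_card LN.
    have := odd_double_half #|L|; rewrite /deg; lia.
  by have [] := maxB okB'; rewrite cardsU1 uB ltnn.
Qed.

End LexMax.

End ISTDSets.

Theorem lemma4p2 (T : finType) (e : rel T) :
  (2 <= #|T|)%N -> is_tree e ->
  exists f : T -> int,
    is_max_ISTDF e f /\
    forall v : T, support_vertex e v ->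
      (#|leaves_at e v| ./2 <= #|[set u in leaves_at e v | f u == 1%R]|)%N.
Proof.
move=> _ [[sym_e _] _].
have [B okB maxB] := exists_istd_set_lex_max e [set u | leaf e u].
exists (signed_indicator B); split.
  by apply: is_max_ISTDF_signed_indicator => // B' /maxB[].
move=> v _; rewrite (_ : [set u in _ | _] = leaves_at e v :&: B).
  exact: half_leaves_at_in_lex_max.
by apply/setP=> u; rewrite !inE /signed_indicator; case: (u \in B); rewrite ?andbT ?andbF.
Qed.
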